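(* Fix an integer $k \ge 2$ and let $(G_n)_{n \ge 0}$ be the $k$-bonacci sequence defined by $G_0 = G_1 = \dots = G_{k-2} = 0$, $G_{k-1} = 1$, and $G_n = \sum_{i=1}^{k} G_{n-i}$ for all $n \ge k$. Define $D_k = 2(k-1)$ and, for $0 \le i \le j \le k-1$, define $$N_{0,0} = -(k-2), \qquad N_{i,i} = 4 - (i+3)(k-i) \ \ (1 \le i \le k-1), \qquad N_{i,j} = 2(i+1)\bigl(j-(k-2)\bigr) \ \ (0 \le i \le k-2,\ i+1 \le j \le k-1).$$ Then for every integer $m \ge 0$, $$\sum_{i=0}^{m} G_i^2 \;=\; \sum_{\substack{0 \le i \le k-1 \\ i \le j \le k-1}} \frac{N_{i,j}}{D_k}\, G_{m+i}\, G_{m+j} \;-\; \frac{N_{k-1,k-1}}{D_k}.$$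
   Context: The numbers $N_{i,j}$ depend on $k$ as well as on $i,j$. Note $N_{k-1,k-1} = 2-k$, so the constant term equals $\frac{k-2}{2(k-1)}$. For $k=2,3,4,5$ the sequence is the Fibonacci, Tribonacci, Tetranacci and Pentanacci sequence respectively. *)

From mathcomp Require Import all_boot all_order all_algebra.
Set Implicit Arguments. Unset Strict Implicit. Unset Printing Implicit Defensive.
Import Order.TTheory GRing.Theory Num.Theory.
Local Open Scope ring_scope.

Definition Ncoef (k i j : nat) : int :=
  if i == j then
    (if i == 0%N then - (k%:Z - 2) else 4 - (i%:Z + 3) * (k%:Z - i%:Z))
  else 2 * (i%:Z + 1) * (j%:Z - (k%:Z - 2)).

Definition Dk (k : nat) : int := 2 * (k%:Z - 1).

From mathcomp Require Import all_boot all_order all_algebra ring zify.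
Set Implicit Arguments.
Unset Strict Implicit.
Import Order.TTheory GRing.Theory Num.Theory.
Local Open Scope ring_scope.

(* For x : nat -> R let Q_n(x) = \sum_(i <= j < n) N_{i,j} x_i x_j, W = \sum_i (i+1) x_i and
   T_a = \sum_(a <= i < n) x_i (Nform, wsum and tailsum).  By induction on n,
     Q_n(x) = W^2 - (k-1) \sum_a T_a^2 - D_k \sum_(1 <= i < n) x_i^2.
   If x_k = x_0 + ... + x_(k-1), shifting x by one index turns T_a into T_(a+1) + x_k, and
   this closed form gives Q_k(x shifted) = Q_k(x) + D_k x_1^2.  On the windows
   (G_m, ..., G_(m+k-1)) of the k-bonacci sequence this telescopes, starting from the
   window (0, ..., 0, 1) where Q_k = N_(k-1,k-1). *)

Section SumShift.
Variable R : comPzRingType.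
Implicit Types (f : nat -> R) (c : R).

Lemma sumr_nat_shift f m n : (m <= n)%N ->
  \sum_(m <= i < n) f i.+1 = \sum_(m <= i < n) f i - f m + f n.
Proof.
move=> le_mn; have split_ends : \sum_(m <= i < n.+1) f i = f m + \sum_(m <= i < n) f i.+1.
  exact: big_nat_recl.
rewrite big_nat_recr //= in split_ends.
by apply: (addrI (f m)); rewrite -split_ends; ring.
Qed.

Lemma sumr_sqrrD_const f c n :
  \sum_(0 <= i < n) (f i + c) ^+ 2 =
  \sum_(0 <= i < n) f i ^+ 2 + 2 * c * \sum_(0 <= i < n) f i + n%:R * c ^+ 2.
Proof.
elim: n => [|n IH]; first by rewrite !big_geq //; ring.
by rewrite !big_nat_recr //= IH; ring.
Qed.

End SumShift.

Lemma sum_triangle_recr (R : nmodType) (f : nat -> nat -> R) n :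
  \sum_(0 <= i < n.+1) \sum_(i <= j < n.+1) f i j =
  \sum_(0 <= i < n) \sum_(i <= j < n) f i j + \sum_(0 <= i < n) f i n + f n n.
Proof.
rewrite big_nat_recr //= big_nat1 -big_split /=; congr (_ + _).
by apply: eq_big_nat => i /andP[_ lt_in]; rewrite big_nat_recr // ltnW.
Qed.

Section NForm.
Variables (R : comPzRingType) (k : nat).
Implicit Types (x : nat -> R) (n : nat).

Definition Nform n x : R :=
  \sum_(0 <= i < n) \sum_(i <= j < n) (Ncoef k i j)%:~R * x i * x j.

Definition wsum x n : R := \sum_(0 <= i < n) i.+1%:R * x i.

Definition tailsum x a n : R := \sum_(a <= i < n) x i.

Lemma eq_Nform n x y : (forall i, x i = y i) -> Nform n x = Nform n y.
Proof.
by move=> eq_xy; apply: eq_bigr => i _; apply: eq_bigr => j _; rewrite !eq_xy.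
Qed.

Lemma Ncoef_lt i j : (i < j)%N -> Ncoef k i j = 2 * (i%:Z + 1) * (j%:Z + 2 - k%:Z).
Proof. by move=> lt_ij; rewrite /Ncoef ltn_eqF //; ring. Qed.

Lemma tailsumS x a n : (a <= n)%N -> tailsum x a n.+1 = tailsum x a n + x n.
Proof. exact: big_nat_recr. Qed.

Lemma sum_tailsum x n : \sum_(0 <= a < n) tailsum x a n = wsum x n.
Proof.
elim: n => [|n IH]; first by rewrite /wsum !big_geq.
rewrite big_nat_recr //=.
have -> : \sum_(0 <= a < n) tailsum x a n.+1 = \sum_(0 <= a < n) tailsum x a n + x n *+ n.
  transitivity (\sum_(0 <= a < n) (tailsum x a n + x n)).
    by apply: eq_big_nat => a /andP[_ lt_an]; rewrite tailsumS ?(ltnW lt_an).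
  by rewrite big_split sumr_const_nat subn0.
rewrite /wsum big_nat_recr //= -/(wsum x n) -IH /tailsum big_nat1.
by rewrite -mulr_natl; ring.
Qed.

Lemma Nform_recr x n :
  Nform n.+1 x = Nform n x + 2 * (n%:R + 2 - k%:R) * x n * wsum x n
                 + (Ncoef k n n)%:~R * x n ^+ 2.
Proof.
rewrite /Nform sum_triangle_recr; congr (_ + _ + _); last by ring.
rewrite /wsum !mulr_sumr; apply: eq_big_nat => i /andP[_ lt_in].
by rewrite Ncoef_lt //; ring.
Qed.

Lemma wsumS x n : wsum x n.+1 = wsum x n + n.+1%:R * x n.
Proof. exact: big_nat_recr. Qed.

Lemma sum_tailsumS_sqr x n :
  \sum_(0 <= a < n.+1) tailsum x a n.+1 ^+ 2 =
  \sum_(0 <= a < n) tailsum x a n ^+ 2 + 2 * x n * wsum x n + n.+1%:R * x n ^+ 2.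
Proof.
rewrite big_nat_recr //= {2}/tailsum big_nat1.
transitivity (\sum_(0 <= a < n) (tailsum x a n + x n) ^+ 2 + x n ^+ 2).
  by congr (_ + _); apply: eq_big_nat => a /andP[_ lt_an]; rewrite tailsumS ?(ltnW lt_an).
by rewrite sumr_sqrrD_const sum_tailsum; ring.
Qed.

Lemma NformE x n :
  Nform n x = wsum x n ^+ 2 - (k%:R - 1) * \sum_(0 <= a < n) tailsum x a n ^+ 2
              - (Dk k)%:~R * \sum_(1 <= i < n) x i ^+ 2.
Proof.
elim: n => [|n IH]; first by rewrite /Nform /wsum !big_geq //; ring.
rewrite Nform_recr IH wsumS sum_tailsumS_sqr /Dk /Ncoef eqxx.
case: n {IH} => [|n] /=; first by rewrite /wsum !big_geq //; ring.
by rewrite (big_nat_recr n.+1 1) //=; ring.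
Qed.

Lemma Nform_shift x : (1 < k)%N -> x k = \sum_(0 <= i < k) x i ->
  Nform k (fun i => x i.+1) = Nform k x + (Dk k)%:~R * x 1%N ^+ 2.
Proof.
move=> lt1k x_k.
have tail0 : tailsum x 0 k = x k by rewrite x_k.
have tailk : tailsum x k k = 0 by rewrite /tailsum big_geq.
have tail_shift a : (a < k)%N ->
    tailsum (fun i => x i.+1) a k = tailsum x a.+1 k + x k.
  move=> lt_ak; rewrite /tailsum (sumr_nat_shift x (ltnW lt_ak)) (big_ltn lt_ak).
  by ring.
have sum_tailsS : \sum_(0 <= a < k) tailsum x a.+1 k = wsum x k - x k.
  by rewrite (sumr_nat_shift (fun a => tailsum x a k)) // sum_tailsum tail0 tailk addr0.
have sum_tailsS_sqr : \sum_(0 <= a < k) tailsum x a.+1 k ^+ 2 =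
    \sum_(0 <= a < k) tailsum x a k ^+ 2 - x k ^+ 2.
  by rewrite (sumr_nat_shift (fun a => tailsum x a k ^+ 2)) // tail0 tailk expr0n addr0.
have wsum_shift : wsum (fun i => x i.+1) k = wsum x k + (k%:R - 1) * x k.
  rewrite -sum_tailsum.
  transitivity (\sum_(0 <= a < k) (tailsum x a.+1 k + x k)).
    by apply: eq_big_nat => a /andP[_ lt_ak]; rewrite tail_shift.
  by rewrite big_split /= sumr_const_nat subn0 sum_tailsS; ring.
have sum_tails_shift_sqr : \sum_(0 <= a < k) tailsum (fun i => x i.+1) a k ^+ 2 =
    \sum_(0 <= a < k) tailsum x a k ^+ 2 + 2 * x k * wsum x k + (k%:R - 3) * x k ^+ 2.
  transitivity (\sum_(0 <= a < k) (tailsum x a.+1 k + x k) ^+ 2).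
    by apply: eq_big_nat => a /andP[_ lt_ak]; rewrite tail_shift.
  by rewrite sumr_sqrrD_const sum_tailsS_sqr sum_tailsS; ring.
have diag_shift : \sum_(1 <= i < k) x i.+1 ^+ 2 =
    \sum_(1 <= i < k) x i ^+ 2 - x 1%N ^+ 2 + x k ^+ 2.
  by rewrite (sumr_nat_shift (fun i => x i ^+ 2)) // ltnW.
rewrite !NformE /= wsum_shift sum_tails_shift_sqr diag_shift /Dk; ring.
Qed.

Lemma Nform_base x n : (forall i, (i < n)%N -> x i = 0) -> x n = 1 ->
  Nform n.+1 x = (Ncoef k n n)%:~R.
Proof.
move=> x_lt x_n; have wsum0 : wsum x n = 0.
  by rewrite /wsum big_nat big1 // => i /andP[_ lt_in]; rewrite x_lt ?mulr0.
have Nform0 : Nform n x = 0.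
  rewrite /Nform big_nat big1 // => i /andP[_ lt_in].
  by rewrite big1 // => j _; rewrite x_lt // mulr0 mul0r.
by rewrite Nform_recr Nform0 wsum0 x_n; ring.
Qed.

End NForm.

Lemma kbonacci_window (G : nat -> int) k :
  (forall n, (k <= n)%N -> G n = \sum_(1 <= i < k.+1) G (n - i)%N) ->
  forall m, G (m + k)%N = \sum_(0 <= i < k) G (m + i)%N.
Proof.
move=> G_rec m; rewrite G_rec ?leq_addl // big_add1 /= big_nat_rev /=.
by apply: eq_big_nat => i /andP[_ lt_ik]; congr G; lia.
Qed.

Lemma kbonacci_sum_sqr (R : comPzRingType) (k : nat) (G : nat -> int) :
  (2 <= k)%N ->
  (forall n : nat, (n < k.-1)%N -> G n = 0) -> G k.-1 = 1 ->
  (forall n : nat, (k <= n)%N -> G n = \sum_(1 <= i < k.+1) G (n - i)%N) ->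
  forall m, (Dk k)%:~R * \sum_(0 <= i < m.+1) (G i)%:~R ^+ 2 =
            Nform k k (fun i => (G (m + i)%N)%:~R : R) - (Ncoef k k.-1 k.-1)%:~R.
Proof.
case: k => [//|n] lt1k G_init G_one G_rec /=; elim=> [|m IH].
  rewrite big_nat1 G_init // expr0n mulr0 Nform_base ?subrr // => [i /G_init -> //|].
  by rewrite G_one.
rewrite big_nat_recr //= mulrDr IH.
have -> : Nform n.+1 n.+1 (fun i => (G (m.+1 + i)%N)%:~R : R) =
          Nform n.+1 n.+1 (fun i => (G (m + i.+1)%N)%:~R).
  by apply: eq_Nform => i; rewrite addSnnS.
rewrite (Nform_shift (x := fun i => (G (m + i)%N)%:~R)) //; last first.
  by rewrite -rmorph_sum /= kbonacci_window.
by rewrite addn1; ring.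
Qed.

Theorem mainTheorem1 (k : nat) (hk : (2 <= k)%N) (G : nat -> int)
  (G_init : forall n : nat, (n < k.-1)%N -> G n = 0)
  (G_one : G k.-1 = 1)
  (G_rec : forall n : nat, (k <= n)%N -> G n = \sum_(1 <= i < k.+1) G (n - i)%N)
  (m : nat) :
  (\sum_(0 <= i < m.+1) (G i)%:~R ^+ 2 : rat) =
  \sum_(0 <= i < k) \sum_(i <= j < k)
      ((Ncoef k i j)%:~R / (Dk k)%:~R) * (G (m + i)%N)%:~R * (G (m + j)%N)%:~R
  - (Ncoef k k.-1 k.-1)%:~R / (Dk k)%:~R.
Proof.
have Dk_neq0 : (Dk k)%:~R != 0 :> rat by rewrite intr_eq0 /Dk; lia.
set x := fun i => (G (m + i)%N)%:~R : rat.
have -> : \sum_(0 <= i < k) \sum_(i <= j < k) (Ncoef k i j)%:~R / (Dk k)%:~R * x i * x j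
          = Nform k k x / (Dk k)%:~R.
  rewrite mulr_suml; apply: eq_bigr => i _; rewrite mulr_suml.
  by apply: eq_bigr => j _; ring.
by apply: (mulfI Dk_neq0); rewrite /= kbonacci_sum_sqr //; field.
Qed.
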